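(* Let $G=(V,E)$ be a finite simple connected graph with diameter $d$. Suppose there exist integers $n_1,\dots,n_d\ge 1$ with $\sum_{i=1}^d n_i=|V|-1$ such that for every vertex $v\in V$ and every $1\le i\le d$, exactly $n_i$ vertices are at distance $i$ from $v$. Then for any rank assignment $f:V\to\mathbb{R}$ under which all vertices have distinct strings, and any real numbers $k\neq 0$ and $b$, the rank assignment $v\mapsto kf(v)+b$ also gives all vertices distinct strings. Furthermore, if additionally $IDI(G)=2$, then $G$ is an ID-graph.
   Context: For a graph $G=(V,E)$ with diameter $d$, a rank assignment is a function $f:V\to\mathbb{R}$; under $f$, the string of a vertex $v$ is the $d$-vector whose $i$-th coordinate is the sum of $f(w)$ over all vertices $w$ with $d(v,w)=i$. The ID-index $IDI(G)$ is the minimum $k$ such that there exists $f:V\to\mathbb{R}$ with $|f(V)|=k$ under which all vertices have distinct strings. A red-white coloring of $G$ assigns red or white to each vertex with at least one vertex red; the code of a vertex $v$ is the $d$-vector whose $i$-th coordinate is the number of red vertices at distance $i$ from $v$. A red-white coloring in which all vertices have distinct codes is an ID-coloring, and $G$ is an ID-graph if it has an ID-coloring. *)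

(* A finite simple graph is a symmetric irreflexive relation
   e : rel T on a finType T. *)
From mathcomp Require Import all_boot all_order all_algebra.
From mathcomp Require Import reals.
Set Implicit Arguments. Unset Strict Implicit. Unset Printing Implicit Defensive.
Import Order.TTheory GRing.Theory Num.Theory.
Local Open Scope ring_scope.

Section Graph.
Variables (T : finType) (e : rel T).

Fixpoint ball (k : nat) (x : T) : {set T} :=
  match k with
  | 0 => [set x]
  | k'.+1 => ball k' x :|: [set y | [exists z in ball k' x, e z y]]
  end.

(* graph distance (meaningful for connected graphs: every distance is < #|T|) *)
Definition dist (x y : T) : nat := find (fun k => y \in ball k x) (iota 0 #|T|).

Definition connected_graph : Prop := forall x y : T, connect e x y.

Definition diameter : nat := \max_(p : T * T) dist p.1 p.2.

(* string of v under rank assignment f: i-th coordinate (i = 1..d) is the sum of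
   f over vertices at distance i from v; index j : 'I_d stands for i = j+1 *)
Definition rstring (R : realType) (f : T -> R) (v : T) : {ffun 'I_diameter -> R} :=
  [ffun j : 'I_diameter => \sum_(w | dist v w == j.+1) f w].

Definition distinct_strings (R : realType) (f : T -> R) : Prop :=
  injective (rstring f).

Definition num_ranks (R : realType) (f : T -> R) : nat :=
  size (undup [seq f v | v <- enum T]).

Definition IDI_is (R : realType) (k : nat) : Prop :=
  (exists f : T -> R, distinct_strings f /\ num_ranks f = k) /\
  (forall f : T -> R, distinct_strings f -> (k <= num_ranks f)%N).

(* red-white colouring: c v = true means v is red *)
Definition code (c : T -> bool) (v : T) : {ffun 'I_diameter -> nat} :=
  [ffun j : 'I_diameter => #|[set w | c w & dist v w == j.+1]|].

Definition ID_coloring (c : T -> bool) : Prop :=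
  (exists v, c v) /\ injective (code c).

Definition ID_graph : Prop := exists c : T -> bool, ID_coloring c.

End Graph.

From mathcomp Require Import all_boot all_order all_algebra.
From mathcomp Require Import reals.
Set Implicit Arguments. Unset Strict Implicit.
Import Order.TTheory GRing.Theory Num.Theory.
Local Open Scope ring_scope.

(* When every sphere of radius i has the same size n_i, the string of v under
   k f + b is k (string of v under f) + b (n_1, ..., n_d): an injective affine
   image of the f-string, so distinctness is preserved in both directions.  A
   rank assignment with exactly two values a != c is such an affine image of the
   indicator of its c-level set, whose strings are the codes of that red-white
   colouring; hence if IDI(G) = 2 the colouring is an ID-coloring. *)

Section Strings.
Variables (R : realType) (T : finType) (e : rel T).

Lemma eq_rstring (f g : T -> R) : f =1 g -> rstring e f =1 rstring e g.
Proof. by move=> fg v; apply/ffunP=> j; rewrite !ffunE; apply: eq_bigr. Qed.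

Lemma rstring_indicator (c : T -> bool) v j :
  rstring e (fun w => (c w)%:R : R) v j = (code e c v j)%:R.
Proof.
rewrite !ffunE -sum1_card natr_sum big_mkcond [RHS]big_mkcond /=.
by apply: eq_bigr => w _; rewrite inE; case: (c w); case: ifP.
Qed.

Lemma distinct_strings_indicator (c : T -> bool) :
  distinct_strings e (fun w => (c w)%:R : R) -> injective (code e c).
Proof.
move=> c_str u v uv; apply: c_str; apply/ffunP=> j.
by rewrite !rstring_indicator uv.
Qed.

Variable n : 'I_(diameter e) -> nat.
Hypothesis sphere_card :
  forall v (i : 'I_(diameter e)), #|[set w | dist e v w == i.+1]| = n i.

Lemma rstring_affine (f : T -> R) k b v j :
  rstring e (fun w => k * f w + b) v j = k * rstring e f v j + b *+ n j.
Proof.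
by rewrite !ffunE big_split /= -mulr_sumr sumr_const -(sphere_card v) cardsE.
Qed.

Lemma distinct_strings_affine (f : T -> R) k b : k != 0 ->
  distinct_strings e (fun w => k * f w + b) <-> distinct_strings e f.
Proof.
move=> k0; split=> f_str u v uv; apply: f_str; apply/ffunP=> j.
  by rewrite !rstring_affine uv.
by move/ffunP/(_ j): uv; rewrite !rstring_affine => /addIr /(mulfI k0).
Qed.

End Strings.

Lemma num_ranks2P (R : realType) (T : finType) (f : T -> R) :
  num_ranks f = 2%N ->
  exists a c, [/\ a != c, exists v, f v = c & forall v, f v = a \/ f v = c].
Proof.
rewrite /num_ranks; set s := [seq f v | v <- enum T].
have f_mem v : f v \in undup s by rewrite mem_undup map_f ?mem_enum.
have := undup_uniq s; case s_vals: (undup s) => [|a [|c []]] // /andP[ac _] _.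
exists a, c; split; first by rewrite inE in ac.
  have : c \in undup s by rewrite s_vals !inE eqxx orbT.
  by rewrite mem_undup => /mapP[v _ ->]; exists v.
by move=> v; move: (f_mem v); rewrite s_vals !inE => /orP[] /eqP; [left | right].
Qed.

Theorem mainTheorem4 (R : realType) (T : finType) (e : rel T)
  (e_sym : symmetric e) (e_irr : irreflexive e)
  (Gconn : connected_graph e)
  (Hreg : exists n : 'I_(diameter e) -> nat,
      (forall i, (1 <= n i)%N) /\
      (\sum_(i < diameter e) n i)%N = (#|T| - 1)%N /\
      (forall (v : T) (i : 'I_(diameter e)),
          #|[set w | dist e v w == i.+1]| = n i)) :
  (forall (f : T -> R), distinct_strings e f ->
     forall k b : R, k != 0 ->
       distinct_strings e (fun v => k * f v + b)) /\
  (IDI_is e R 2 -> ID_graph e).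
Proof.
have [n [_ [_ sphere_card]]] := Hreg.
split=> [f f_str k b k0 | [[f [f_str /num_ranks2P[a [c [ac [v0 f_v0] f_ac]]]]] _]].
  exact/(distinct_strings_affine sphere_card).
pose red v := f v == c.
exists red; split; first by exists v0; rewrite /red f_v0.
have ca0 : c - a != 0 by rewrite subr_eq0 eq_sym.
have f_affine : f =1 (fun v => (c - a) * (red v)%:R + a).
  move=> v; rewrite /red; case: (f_ac v) => ->; first by rewrite (negbTE ac) mulr0 add0r.
  by rewrite eqxx mulr1 subrK.
apply/distinct_strings_indicator/(distinct_strings_affine sphere_card _ _ ca0).
exact: eq_inj f_str (eq_rstring e f_affine).
Qed.
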